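(* In the setting described in the context, for every $t\in\{0,1,\dots,T\}$ the value function $V^{(t)}_\theta(s)$, viewed as a function of $(\theta,s)$, is Lipschitz with constant $L_V^{(t)}\le 3T^2L_{R_\theta}\bar L_{f_\theta}^{T-t-1}$.
   Context: Transitions $s_{t+1}=f(s_t,a_t)+\zeta_t$ with $\zeta_t\sim p(\zeta)$ i.i.d.; deterministic policy $\pi_\theta$, $\theta\in\Theta\subseteq\mathbb{R}^{d_\Theta}$; $f_\theta(s)=f(s,\pi_\theta(s))$ and $R_\theta(s)=R(s,\pi_\theta(s))$, viewed as functions of $(\theta,s)$. Value functions: $V^{(T)}_\theta\equiv 0$ and $V^{(t)}_\theta(s)=R_\theta(s)+\mathbb{E}_{p(\zeta)}[V^{(t+1)}_\theta(f_\theta(s)+\zeta)]$ for $t=0,\dots,T-1$. $L_h$ denotes a Lipschitz constant (Euclidean norm) of $h$ jointly in $(\theta,s)$, and $\bar L_h=\max\{L_{\nabla h},L_h,1\}$. Standing assumption: $f_\theta,R_\theta$ are Lipschitz and twice continuously differentiable with Lipschitz first derivative. *)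

From HB Require Import structures.
From mathcomp Require Import all_boot all_order all_algebra.
From mathcomp Require Import all_classical all_reals all_analysis.
Set Implicit Arguments. Unset Strict Implicit. Unset Printing Implicit Defensive.
Import Order.TTheory GRing.Theory Num.Theory.
Import numFieldNormedType.Exports.
Local Open Scope classical_set_scope.
Local Open Scope ring_scope.

Section Defs.
Variable R : realType.

(* Euclidean norm on row vectors R^k (the library's norm on 'rV is the max norm). *)
Definition enorm (k : nat) (v : 'rV[R]_k) : R :=
  Num.sqrt (\sum_(i < k) v ord0 i ^+ 2).

Definition joinfun (d n : nat) (W : Type) (h : 'rV[R]_d -> 'rV[R]_n -> W)
  (z : 'rV[R]_(d + n)) : W := h (lsubmx z) (rsubmx z).

Definition ftheta (d n m : nat) (f : 'rV[R]_n -> 'rV[R]_m -> 'rV[R]_n)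
  (pi : 'rV[R]_d -> 'rV[R]_n -> 'rV[R]_m) (theta : 'rV[R]_d) (s : 'rV[R]_n) :
  'rV[R]_n := f s (pi theta s).
Definition Rtheta (d n m : nat) (r : 'rV[R]_n -> 'rV[R]_m -> R)
  (pi : 'rV[R]_d -> 'rV[R]_n -> 'rV[R]_m) (theta : 'rV[R]_d) (s : 'rV[R]_n) : R :=
  r s (pi theta s).

Definition lip_vec (d n k : nat) (Theta : set 'rV[R]_d)
  (h : 'rV[R]_d -> 'rV[R]_n -> 'rV[R]_k) (L : R) : Prop :=
  forall theta theta' s s', Theta theta -> Theta theta' ->
    enorm (h theta s - h theta' s') <= L * enorm (row_mx theta s - row_mx theta' s').
Definition lip_scal (d n : nat) (Theta : set 'rV[R]_d)
  (h : 'rV[R]_d -> 'rV[R]_n -> R) (L : R) : Prop :=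
  forall theta theta' s s', Theta theta -> Theta theta' ->
    `|h theta s - h theta' s'| <= L * enorm (row_mx theta s - row_mx theta' s').

(* Lg is a Lipschitz constant of the first derivative (Jacobian / gradient,
   operator norm w.r.t. Euclidean norms) of h jointly in (theta, s). *)
Definition grad_lip_vec (d n k : nat) (Theta : set 'rV[R]_d)
  (h : 'rV[R]_d -> 'rV[R]_n -> 'rV[R]_k) (Lg : R) : Prop :=
  forall (z z' v : 'rV[R]_(d + n)), Theta (lsubmx z) -> Theta (lsubmx z') ->
    enorm (derive (joinfun h) z v - derive (joinfun h) z' v)
      <= Lg * enorm (z - z') * enorm v.
Definition grad_lip_scal (d n : nat) (Theta : set 'rV[R]_d)
  (h : 'rV[R]_d -> 'rV[R]_n -> R) (Lg : R) : Prop :=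
  forall (z z' v : 'rV[R]_(d + n)), Theta (lsubmx z) -> Theta (lsubmx z') ->
    `|derive (joinfun h) z v - derive (joinfun h) z' v|
      <= Lg * enorm (z - z') * enorm v.

Definition C2 (p : nat) (W : normedModType R) (H : 'rV[R]_p -> W) : Prop :=
  (forall z, differentiable H z) /\
  (forall v z, differentiable (fun y => derive H y v) z) /\
  (forall v w, continuous (fun y => derive (fun y' => derive H y' v) y w)).

(* Value function with k steps remaining:
   Vrem 0 = 0, Vrem (k+1) theta s = R_theta(s) + E_zeta[Vrem k theta (f_theta(s) + zeta)],
   zeta : Omega -> R^n a random vector with law p, expectation = integral w.r.t. P. *)
Fixpoint Vrem (d n : nat) (dO : measure_display) (Omega : measurableType dO)
  (P : probability Omega R) (zeta : Omega -> 'rV[R]_n)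
  (Rt : 'rV[R]_d -> 'rV[R]_n -> R) (ft : 'rV[R]_d -> 'rV[R]_n -> 'rV[R]_n)
  (k : nat) : 'rV[R]_d -> 'rV[R]_n -> R :=
  match k with
  | 0 => fun _ _ => 0
  | k'.+1 => fun theta s =>
      Rt theta s + Rintegral P setT
        (fun w => Vrem P zeta Rt ft k' theta (ft theta s + zeta w))
  end.

Definition value (d n : nat) (dO : measure_display) (Omega : measurableType dO)
  (P : probability Omega R) (zeta : Omega -> 'rV[R]_n)
  (Rt : 'rV[R]_d -> 'rV[R]_n -> R) (ft : 'rV[R]_d -> 'rV[R]_n -> 'rV[R]_n)
  (T t : nat) : 'rV[R]_d -> 'rV[R]_n -> R :=
  Vrem P zeta Rt ft (T - t).

End Defs.

From HB Require Import structures.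
From mathcomp Require Import all_boot all_order all_algebra.
From mathcomp Require Import all_classical all_reals all_analysis.
From mathcomp Require Import ring lra zify.
Set Implicit Arguments. Unset Strict Implicit. Unset Printing Implicit Defensive.
Import Order.TTheory GRing.Theory Num.Theory.
Import numFieldNormedType.Exports.
Local Open Scope classical_set_scope.
Local Open Scope ring_scope.

(* Split the distance between (theta, s) and (theta', s') into a parameter
   part a = |theta - theta'| and a state part b = |s - s'|.  One step of the
   dynamics keeps a and maps b to at most Lb (a + b), where
   Lb = max(LgradF, Lf, 1) >= max(Lf, 1).  Tracking a and b separately
   (rather than the joint distance, which would grow like (1 + Lb)^k), an
   induction on the number k of remaining steps gives
     |V_k(theta, s) - V_k(theta', s')| <= LR k Lb^(k-1) (k a + b),
   and a, b <= |(theta, s) - (theta', s')| turns k (k + 1) into 3 T^2. *)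

Section EuclideanNorm.
Variable R : realType.

Lemma enorm_ge0 k (v : 'rV[R]_k) : 0 <= enorm v.
Proof. exact: sqrtr_ge0. Qed.

Lemma enorm_sqr k (v : 'rV[R]_k) : enorm v ^+ 2 = \sum_(i < k) v ord0 i ^+ 2.
Proof. by rewrite sqr_sqrtr // sumr_ge0 // => i _; rewrite sqr_ge0. Qed.

Lemma enorm0_eq0 k (v : 'rV[R]_k) : enorm v = 0 -> v = 0.
Proof.
move=> v0; have /eqP : enorm v ^+ 2 = 0 by rewrite v0 expr0n.
rewrite enorm_sqr psumr_eq0 => [/allP vi0|i _]; last exact: sqr_ge0.
apply/rowP => i; rewrite mxE.
by move: (vi0 i (mem_index_enum i)); rewrite sqrf_eq0 => /eqP.
Qed.

Lemma enorm_row_mx d n (x : 'rV[R]_d) (y : 'rV[R]_n) :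
  enorm (row_mx x y) = Num.sqrt (enorm x ^+ 2 + enorm y ^+ 2).
Proof.
rewrite !enorm_sqr /enorm big_split_ord /=.
by congr (Num.sqrt (_ + _)); apply: eq_bigr => i _; rewrite ?row_mxEl ?row_mxEr.
Qed.

Lemma enorm_row_mx_le d n (x : 'rV[R]_d) (y : 'rV[R]_n) :
  enorm (row_mx x y) <= enorm x + enorm y.
Proof.
rewrite enorm_row_mx -[enorm x + enorm y]ger0_norm ?addr_ge0 ?enorm_ge0 // -sqrtr_sqr.
by apply: ler_wsqrtr; rewrite sqrrD lerD2r lerDl mulrn_wge0 ?mulr_ge0 ?enorm_ge0.
Qed.

Lemma le_enorm_row_mxl d n (x : 'rV[R]_d) (y : 'rV[R]_n) :
  enorm x <= enorm (row_mx x y).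
Proof.
rewrite enorm_row_mx -{1}[enorm x]ger0_norm ?enorm_ge0 // -sqrtr_sqr.
by apply: ler_wsqrtr; rewrite lerDl sqr_ge0.
Qed.

Lemma le_enorm_row_mxr d n (x : 'rV[R]_d) (y : 'rV[R]_n) :
  enorm y <= enorm (row_mx x y).
Proof.
rewrite enorm_row_mx -{1}[enorm y]ger0_norm ?enorm_ge0 // -sqrtr_sqr.
by apply: ler_wsqrtr; rewrite lerDr sqr_ge0.
Qed.

End EuclideanNorm.

Section JointLipschitz.
Variables (R : realType) (d n : nat) (Theta : set 'rV[R]_d).

Lemma row_mxB (x x' : 'rV[R]_d) (y y' : 'rV[R]_n) :
  row_mx x y - row_mx x' y' = row_mx (x - x') (y - y').
Proof. by rewrite opp_row_mx add_row_mx. Qed.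

Lemma lip_vec_le k (h : 'rV[R]_d -> 'rV[R]_n -> 'rV[R]_k) L L' :
  L <= L' -> lip_vec Theta h L -> lip_vec Theta h L'.
Proof.
move=> LL' hL th th' s s' Hth Hth'.
exact: le_trans (hL _ _ _ _ Hth Hth') (ler_wpM2r (enorm_ge0 _) LL').
Qed.

Lemma lip_vec_split k (h : 'rV[R]_d -> 'rV[R]_n -> 'rV[R]_k) L :
  0 <= L -> lip_vec Theta h L -> forall th th' s s', Theta th -> Theta th' ->
  enorm (h th s - h th' s') <= L * (enorm (th - th') + enorm (s - s')).
Proof.
move=> L0 hL th th' s s' Hth Hth'; apply: le_trans (hL _ _ _ _ Hth Hth') _.
by rewrite ler_wpM2l // row_mxB enorm_row_mx_le.
Qed.

Lemma lip_scal_split (h : 'rV[R]_d -> 'rV[R]_n -> R) L :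
  0 <= L -> lip_scal Theta h L -> forall th th' s s', Theta th -> Theta th' ->
  `|h th s - h th' s'| <= L * (enorm (th - th') + enorm (s - s')).
Proof.
move=> L0 hL th th' s s' Hth Hth'; apply: le_trans (hL _ _ _ _ Hth Hth') _.
by rewrite ler_wpM2l // row_mxB enorm_row_mx_le.
Qed.

Lemma lip_scal_ge0 (h : 'rV[R]_d -> 'rV[R]_n -> R) L th th' (s s' : 'rV[R]_n) :
  lip_scal Theta h L -> Theta th -> Theta th' ->
  0 < enorm (row_mx th s - row_mx th' s') -> 0 <= L.
Proof.
move=> hL Hth Hth' E_gt0; rewrite -(pmulr_lge0 _ E_gt0).
exact: le_trans (normr_ge0 _) (hL _ _ _ _ Hth Hth').
Qed.

Lemma lip_scal_distinct (h : 'rV[R]_d -> 'rV[R]_n -> R) L :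
  (forall th th' s s', Theta th -> Theta th' ->
     0 < enorm (row_mx th s - row_mx th' s') ->
     `|h th s - h th' s'| <= L * enorm (row_mx th s - row_mx th' s')) ->
  lip_scal Theta h L.
Proof.
move=> hL th th' s s' Hth Hth'.
have [E_gt0|E_le0] := ltP 0 (enorm (row_mx th s - row_mx th' s')).
  exact: hL.
have E0 : enorm (row_mx th s - row_mx th' s') = 0.
  by apply/le_anti; rewrite E_le0 enorm_ge0.
rewrite E0 mulr0; move/enorm0_eq0/eqP: E0; rewrite subr_eq0.
by move=> /eqP/eq_row_mx[-> ->]; rewrite subrr normr0.
Qed.

End JointLipschitz.

Lemma normr_RintegralB_le (R : realType) (dO : measure_display)
    (Omega : measurableType dO) (P : probability Omega R) (g1 g2 : Omega -> R) c :
  P.-integrable setT (EFin \o g1) -> P.-integrable setT (EFin \o g2) ->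
  (forall w, `|g1 w - g2 w| <= c) ->
  `|Rintegral P setT g1 - Rintegral P setT g2| <= c.
Proof.
move=> i1 i2 le_c.
have iB : P.-integrable setT (EFin \o (g1 \- g2)).
  by apply: eq_integrable (integrableB _ i1 i2) => // w _; rewrite /= EFinB.
rewrite -RintegralB //; apply: le_trans (le_normr_Rintegral _ _) _ => //.
have -> : c = Rintegral P setT (fun _ => c).
  rewrite Rintegral_cst // [fine _](_ : _ = 1) ?mulr1 //.
  by rewrite (congr1 fine (probability_setT P)).
apply: le_Rintegral => //; last exact: finite_measure_integrable_cst.
exact: integrable_norm.
Qed.

Lemma lip_bound_step (R : realFieldType) (L a b : R) k :
  1 <= L -> 0 <= a -> 0 <= b ->
  a + b + k%:R * L ^+ k.-1 * (k%:R * a + L * (a + b))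
    <= k.+1%:R * L ^+ k * (k.+1%:R * a + b).
Proof.
move=> L1 a0 b0.
have L0 : 0 <= L by apply: le_trans L1.
have Lk1 : 1 <= L ^+ k by rewrite exprn_ege1.
have shift : k%:R * L ^+ k.-1 * L = k%:R * L ^+ k.
  by case: k {Lk1} => [|k]; rewrite ?mul0r // -mulrA -exprSr.
have grow : k%:R * L ^+ k.-1 <= k%:R * L ^+ k.
  by rewrite -shift ler_peMr // mulr_ge0 // exprn_ge0.
rewrite -natr1 mulrDr [_ * (L * _)]mulrA shift.
set c := k%:R * L ^+ k.-1; set p := L ^+ k; set K : R := k%:R.
have cKa : c * (K * a) <= K * p * (K * a) by rewrite ler_wpM2r ?mulr_ge0.
have ab : a + b <= p * ((K + 1) * a + b).
  rewrite -[a + b]mul1r ler_pM ?addr_ge0 ?mulr_ge0 ?addr_ge0 // lerD2r.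
  by rewrite ler_peMl // lerDr.
lra.
Qed.

Section ValueLipschitz.
Variables (R : realType) (d n : nat) (dO : measure_display).
Variables (Omega : measurableType dO) (P : probability Omega R).
Variables (zeta : Omega -> 'rV[R]_n) (Theta : set 'rV[R]_d).
Variables (Rt : 'rV[R]_d -> 'rV[R]_n -> R) (ft : 'rV[R]_d -> 'rV[R]_n -> 'rV[R]_n).
Variables (LR Lb : R) (K : nat).
Hypothesis LR_ge0 : 0 <= LR.
Hypothesis Lb_ge1 : 1 <= Lb.
Hypothesis Rt_lip : forall th th' s s', Theta th -> Theta th' ->
  `|Rt th s - Rt th' s'| <= LR * (enorm (th - th') + enorm (s - s')).
Hypothesis ft_lip : forall th th' s s', Theta th -> Theta th' ->
  enorm (ft th s - ft th' s') <= Lb * (enorm (th - th') + enorm (s - s')).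
Hypothesis Vrem_integrable : forall k, (k < K)%N -> forall th s, Theta th ->
  P.-integrable setT (EFin \o (fun w => Vrem P zeta Rt ft k th (ft th s + zeta w))).

Local Notation V := (Vrem P zeta Rt ft).

Lemma Vrem_lip k : (k <= K)%N -> forall th th' s s', Theta th -> Theta th' ->
  `|V k th s - V k th' s'|
    <= LR * (k%:R * Lb ^+ k.-1) * (k%:R * enorm (th - th') + enorm (s - s')).
Proof.
elim: k => [|k IH] kK th th' s s' Hth Hth'.
  by rewrite /= subrr normr0 !mul0r mulr0 mul0r.
set a := enorm (th - th'); set b := enorm (s - s').
have a0 : 0 <= a by exact: enorm_ge0.
have b0 : 0 <= b by exact: enorm_ge0.
have next_state : enorm (ft th s - ft th' s') <= Lb * (a + b) by exact: ft_lip.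
have reward : `|Rt th s - Rt th' s'| <= LR * (a + b) by exact: Rt_lip.
have expectation :
    `|Rintegral P setT (fun w => V k th (ft th s + zeta w)) -
      Rintegral P setT (fun w => V k th' (ft th' s' + zeta w))|
    <= LR * (k%:R * Lb ^+ k.-1) * (k%:R * a + Lb * (a + b)).
  apply: normr_RintegralB_le; [exact: Vrem_integrable|exact: Vrem_integrable|].
  move=> w; apply: le_trans (IH (ltnW kK) _ _ _ _ Hth Hth') _.
  rewrite opprD addrACA subrr addr0 ler_wpM2l ?lerD2l //.
  by rewrite mulr_ge0 // mulr_ge0 // exprn_ge0 // (le_trans ler01).
rewrite /= opprD addrACA; apply: le_trans (ler_normD _ _) _.
apply: le_trans (lerD reward expectation) _.
rewrite -!mulrA -mulrDr ler_wpM2l // !mulrA.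
exact: lip_bound_step.
Qed.

Lemma Vrem_lip_row_mx k : (k <= K)%N ->
  forall th th' (s s' : 'rV[R]_n), Theta th -> Theta th' ->
  `|V k th s - V k th' s'|
    <= LR * (k%:R * (k%:R + 1)) * Lb ^+ k.-1
       * enorm (row_mx th s - row_mx th' s').
Proof.
move=> kK th th' s s' Hth Hth'; apply: le_trans (Vrem_lip kK s s' Hth Hth') _.
set a := enorm (th - th'); set b := enorm (s - s').
set E := enorm (row_mx th s - row_mx th' s').
have ab : k%:R * a + b <= (k%:R + 1) * E.
  rewrite mulrDl mul1r lerD // ?ler_wpM2l //.
    by rewrite /a /E row_mxB le_enorm_row_mxl.
  by rewrite /b /E row_mxB le_enorm_row_mxr.
rewrite [leLHS](_ : _ = LR * Lb ^+ k.-1 * (k%:R * (k%:R * a + b))); last by ring.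
rewrite [leRHS](_ : _ = LR * Lb ^+ k.-1 * (k%:R * ((k%:R + 1) * E))); last by ring.
rewrite ler_wpM2l ?ler_wpM2l // mulr_ge0 // exprn_ge0 //.
exact: le_trans ler01 Lb_ge1.
Qed.

End ValueLipschitz.

Theorem lemma2 (R : realType) (d n m : nat)
  (dO : measure_display) (Omega : measurableType dO) (P : probability Omega R)
  (zeta : Omega -> 'rV[R]_n)
  (f : 'rV[R]_n -> 'rV[R]_m -> 'rV[R]_n) (r : 'rV[R]_n -> 'rV[R]_m -> R)
  (pi : 'rV[R]_d -> 'rV[R]_n -> 'rV[R]_m) (Theta : set 'rV[R]_d) (T : nat)
  (Lf LgradF LR LgradR : R) :
  lip_vec Theta (ftheta f pi) Lf ->
  lip_scal Theta (Rtheta r pi) LR ->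
  C2 (joinfun (ftheta f pi)) ->
  C2 (joinfun (Rtheta r pi)) ->
  grad_lip_vec Theta (ftheta f pi) LgradF ->
  grad_lip_scal Theta (Rtheta r pi) LgradR ->
  (* the expectations defining the value functions are well defined *)
  (forall t : nat, (t < T)%N -> forall theta s, Theta theta ->
     P.-integrable setT (fun w =>
       (value P zeta (Rtheta r pi) (ftheta f pi) T t.+1 theta
          (ftheta f pi theta s + zeta w))%:E)) ->
  forall t : nat, (t <= T)%N ->
    lip_scal Theta (value P zeta (Rtheta r pi) (ftheta f pi) T t)
      (3 * (T%:R) ^+ 2 * LR
         * (Num.max LgradF (Num.max Lf 1)) ^ (T%:Z - t%:Z - 1)).
Proof.
move=> hf hR _ _ _ _ hint t tT; apply: lip_scal_distinct.
move=> th th' s s' Hth Hth' E_gt0.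
set Lb := Num.max LgradF (Num.max Lf 1).
have Lb_ge1 : 1 <= Lb by rewrite !le_max lexx !orbT.
have Lb_ge0 : 0 <= Lb := le_trans ler01 Lb_ge1.
have Lf_le : Lf <= Lb by rewrite !le_max lexx !orbT.
have LR_ge0 := lip_scal_ge0 hR Hth Hth' E_gt0.
have integrable : forall k, (k < T)%N -> forall th s, Theta th ->
    P.-integrable setT (EFin \o (fun w => Vrem P zeta (Rtheta r pi) (ftheta f pi)
      k th (ftheta f pi th s + zeta w))).
  move=> k kT th0 s0 Hth0; have := hint (T - k.+1)%N _ th0 s0 Hth0.
  by rewrite /value (_ : T - (T - k.+1).+1 = k)%N; [apply; lia | lia].
have := Vrem_lip_row_mx LR_ge0 Lb_ge1 (lip_scal_split LR_ge0 hR)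
  (lip_vec_split Lb_ge0 (lip_vec_le Lf_le hf)) integrable
  (leq_subr t T) s s' Hth Hth'.
rewrite /value; move/le_trans; apply; set k := (T - t)%N.
have [k0|k_gt0] := posnP k.
  by rewrite k0 !(mul0r, mulr0) !mulr_ge0 ?exprz_ge0 ?enorm_ge0.
have -> : (T%:Z - t%:Z - 1 = k.-1 :> int)%R by rewrite /k; lia.
rewrite -exprnP ler_wpM2r ?enorm_ge0 // ler_wpM2r ?exprn_ge0 // mulrC.
rewrite ler_wpM2r //.
have k_ge1 : 1 <= k%:R :> R by rewrite ler1n.
have k_le : k%:R <= T%:R :> R by rewrite ler_nat leq_subr.
nra.
Qed.
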